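(* Let $\Sigma$ be a finite group, $A$ a pseudofield, and $\overline A=\operatorname{Fun}L$ with $A\subseteq\overline A$ via the Taylor homomorphism, where $L$ is an algebraic closure of $A/\mathfrak m$ for a maximal ideal $\mathfrak m$ of $A$. If $B$ is a difference closed pseudofield containing $A$ (i.e. with an injective difference homomorphism $A\to B$), then there exists a difference embedding $\overline A\to B$ whose restriction to $A$ is the given embedding $A\to B$.
   Context: A difference ring is a commutative ring with identity with an action of the group $\Sigma$ by ring automorphisms; a difference homomorphism is a unital ring homomorphism commuting with the actions. A pseudofield is an absolutely flat difference ring with no $\Sigma$-stable ideals other than $0$ and itself. $\operatorname{Fun}L$ is the ring of functions $\Sigma\to L$ with pointwise operations and $(\sigma f)(\tau)=f(\sigma^{-1}\tau)$. The Taylor homomorphism of a ring homomorphism $\varphi\colon A\to L$ (here $A\to A/\mathfrak m\to L$) is the difference homomorphism $\Phi\colon A\to\operatorname{Fun}L$, $\Phi(a)(\tau)=\varphi(\tau^{-1}a)$; it is injective here. A pseudofield $A$ is difference closed if for every $n$ and every $\Sigma$-stable ideal $\mathfrak a$ of the difference polynomial ring $A\{y_1,\dots,y_n\}$ (polynomial ring in indeterminates $\sigma y_i$, $\tau(\sigma y_i)=(\tau\sigma)y_i$) the radical of $\mathfrak a$ equals the set of difference polynomials vanishing at every common zero of $\mathfrak a$ in $A^n$ (evaluation via $\sigma y_i\mapsto\sigma(a_i)$). *)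

From HB Require Import structures.
From mathcomp Require Import all_boot all_order all_algebra all_fingroup.
Set Implicit Arguments. Unset Strict Implicit. Unset Printing Implicit Defensive.
Import GRing.Theory.
Local Open Scope ring_scope.

Section Defs.
Variable gT : finGroupType.

Definition diff_action (R : comNzRingType) (act : gT -> R -> R) : Prop :=
  [/\ forall g, act g 1 = 1,
      forall g x y, act g (x + y) = act g x + act g y,
      forall g x y, act g (x * y) = act g x * act g y &
      forall g, bijective (act g)] /\
  (forall x, act 1%g x = x) /\
  (forall g h x, act (g * h)%g x = act g (act h x)).

Definition ring_ideal (R : comNzRingType) (I : R -> Prop) : Prop :=
  [/\ I 0, forall x y, I x -> I y -> I (x + y) & forall r x, I x -> I (r * x)].

Definition stable_ideal (R : comNzRingType) (act : gT -> R -> R) (I : R -> Prop) :=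
  forall g x, I x -> I (act g x).

Definition maximal_ideal (R : comNzRingType) (I : R -> Prop) : Prop :=
  [/\ ring_ideal I, ~ I 1 &
      forall J, ring_ideal J -> (forall x, I x -> J x) ->
        (forall x, J x -> I x) \/ (forall x, J x)].

Definition absolutely_flat (R : comNzRingType) : Prop :=
  forall a : R, exists b, a = a * a * b.

Definition pseudofield (R : comNzRingType) (act : gT -> R -> R) : Prop :=
  [/\ diff_action act, absolutely_flat R &
      forall I, ring_ideal I -> stable_ideal act I ->
        (forall x, I x -> x = 0) \/ (forall x, I x)].

(* variable (i, sigma) stands for sigma y_i *)
Definition dvar (n : nat) := ('I_n * gT)%type.
Definition dmonom (n : nat) := {ffun dvar n -> nat}.
(* a polynomial is represented by a finite formal sum of terms c * monomial;
   two representations denote the same polynomial iff they have the same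
   coefficients (dcoef). *)
Definition dpoly (R : comNzRingType) (n : nat) := seq (R * dmonom n).

Definition dcoef (R : comNzRingType) n (p : dpoly R n) (m : dmonom n) : R :=
  \sum_(t <- (p : seq (R * dmonom n)) | t.2 == m) t.1.

Definition dadd (R : comNzRingType) n (p q : dpoly R n) : dpoly R n := p ++ q.
Definition dmul (R : comNzRingType) n (p q : dpoly R n) : dpoly R n :=
  [seq (t.1 * u.1, [ffun x => (t.2 x + u.2 x)%N] : dmonom n)
     | t : R * dmonom n <- p, u : R * dmonom n <- q].
Definition done_ (R : comNzRingType) n : dpoly R n := [:: (1, [ffun => 0%N] : dmonom n)].
Definition dpow (R : comNzRingType) n (p : dpoly R n) (k : nat) : dpoly R n :=
  iter k (dmul p) (done_ R n).

(* action: tau (c * prod (sigma y_i)^e) = tau(c) * prod ((tau sigma) y_i)^e *)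
Definition dact (R : comNzRingType) (act : gT -> R -> R) n (tau : gT)
    (p : dpoly R n) : dpoly R n :=
  [seq (act tau t.1, [ffun x : dvar n => t.2 (x.1, (tau^-1 * x.2)%g)] : dmonom n)
     | t : R * dmonom n <- p].

Definition deval (R : comNzRingType) (act : gT -> R -> R) n (a : 'I_n -> R)
    (p : dpoly R n) : R :=
  \sum_(t <- (p : seq (R * dmonom n))) t.1 * \prod_(x : dvar n) act x.2 (a x.1) ^+ t.2 x.

Definition dpoly_ideal (R : comNzRingType) n (P : dpoly R n -> Prop) : Prop :=
  [/\ forall p q, dcoef p =1 dcoef q -> P p -> P q,
      P [::],
      forall p q, P p -> P q -> P (dadd p q) &
      forall p q, P q -> P (dmul p q)].

Definition dpoly_stable (R : comNzRingType) (act : gT -> R -> R) n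
    (P : dpoly R n -> Prop) : Prop :=
  forall tau p, P p -> P (dact act tau p).

(* difference closed: for every Sigma-stable ideal, rad(a) = I(V(a)) *)
Definition difference_closed (R : comNzRingType) (act : gT -> R -> R) : Prop :=
  forall (n : nat) (P : dpoly R n -> Prop),
    dpoly_ideal P -> dpoly_stable act P ->
    forall p : dpoly R n,
      (exists k, P (dpow p k)) <->
      (forall a : 'I_n -> R, (forall q, P q -> deval act a q = 0) ->
         deval act a p = 0).

Definition funact (L : comNzRingType) (sigma : gT) (f : {ffun gT -> L})
  : {ffun gT -> L} := [ffun tau => f (sigma^-1 * tau)%g].

Definition taylor (A L : comNzRingType) (phi : A -> L) (act : gT -> A -> A)
  (a : A) : {ffun gT -> L} := [ffun tau => phi (act tau^-1%g a)].

End Defs.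

From HB Require Import structures.
From mathcomp Require Import all_boot all_order all_algebra all_fingroup.
From mathcomp Require Import zify boolp.
From mathcomp Require classical_sets.
Import GRing.Theory.
Local Open Scope ring_scope.

(* Plan of the proof.
   1. Difference polynomials over B can be evaluated at points of any difference
      B-algebra C.  Difference closedness of B then yields a transfer principle:
      equations satisfied by a point of C modulo a proper stable ideal have a
      solution in B (difference_closed_transfer).
   2. Transferring the delta function of Fun(Sigma, B) gives an idempotent e in B
      whose translates are orthogonal and sum to 1.  Since B is a pseudofield, eB
      is a field, and transferring the point eX of B[X] shows that eB is
      algebraically closed (splitting_alg_closed).
   3. A suitable translate of e makes a |-> e iota(a) have kernel ker phi, so it
      induces an embedding of the field phi(A) into eB; as L is algebraic over
      phi(A), Zorn's lemma extends it to chi : L -> eB (extension_to_field).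
   4. Then f |-> sum_t t(chi(f t)) is the required embedding (fun_embedding). *)

Set Implicit Arguments. Unset Strict Implicit. Unset Printing Implicit Defensive.

Lemma additive_map0 (R S : pzRingType) (f : R -> S) :
  (forall x y, f (x + y) = f x + f y) -> f 0 = 0.
Proof. by move=> fD; apply: (addrI (f 0)); rewrite -fD !addr0. Qed.

Definition rmorph_of (R S : pzRingType) (f : R -> S)
    (fD : forall x y, f (x + y) = f x + f y) (f1 : f 1 = 1)
    (fM : forall x y, f (x * y) = f x * f y) : {rmorphism R -> S} :=
  HB.pack f (GRing.isNmodMorphism.Build _ _ f (additive_map0 fD, fD))
            (GRing.isMonoidMorphism.Build _ _ f (f1, fM)).

Lemma rmorph_ofE R S f fD f1 fM x : @rmorph_of R S f fD f1 fM x = f x.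
Proof. by []. Qed.

Definition FunRing (gT : finGroupType) (R : comNzRingType) := {ffun gT -> R}.
HB.instance Definition _ gT R := GRing.PzRing.on (FunRing gT R).
HB.instance Definition _ gT R :=
  GRing.PzRing_hasCommutativeMul.Build (FunRing gT R) (@ffun_mulC gT R).

Lemma FunRing_mulE gT R (f g : FunRing gT R) t : (f * g) t = f t * g t.
Proof. by rewrite /GRing.mul /= ffunE. Qed.

Lemma FunRing_oneE gT R t : (1 : FunRing gT R) t = 1.
Proof. by rewrite /GRing.one /= ffunE. Qed.

Lemma FunRing_one_neq0 gT R : (1 : FunRing gT R) != 0.
Proof.
by apply/eqP => /ffunP/(_ 1%g); rewrite FunRing_oneE ffunE; apply/eqP/oner_neq0.
Qed.

Record ring_action (gT : finGroupType) (C : comPzRingType) (act : gT -> C -> C) :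
  Prop := RingAction {
  act1 : forall g, act g 1 = 1;
  actD : forall g x y, act g (x + y) = act g x + act g y;
  actM : forall g x y, act g (x * y) = act g x * act g y;
  act_id : forall x, act 1%g x = x;
  act_comp : forall g h x, act (g * h)%g x = act g (act h x) }.

Section RingActionTheory.
Variables (gT : finGroupType) (C : comPzRingType) (act : gT -> C -> C).
Hypothesis act_ok : ring_action act.

Lemma act0 g : act g 0 = 0.
Proof. exact: additive_map0 (actD act_ok g). Qed.

Lemma actN g x : act g (- x) = - act g x.
Proof. by apply: (addrI (act g x)); rewrite -(actD act_ok) !subrr act0. Qed.

Lemma actX g x k : act g (x ^+ k) = act g x ^+ k.
Proof.
by elim: k => [|k IH]; rewrite ?expr0 ?(act1 act_ok) // !exprS (actM act_ok) IH.
Qed.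

Lemma act_sum g (I : Type) (r : seq I) (F : I -> C) :
  act g (\sum_(i <- r) F i) = \sum_(i <- r) act g (F i).
Proof. exact: (big_morph (act g) (actD act_ok g) (act0 g)). Qed.

Lemma act_prod g (I : Type) (r : seq I) (F : I -> C) :
  act g (\prod_(i <- r) F i) = \prod_(i <- r) act g (F i).
Proof. exact: (big_morph (act g) (actM act_ok g) (act1 act_ok g)). Qed.

End RingActionTheory.

Lemma diff_action_ring_action (gT : finGroupType) (R : comNzRingType)
    (act : gT -> R -> R) : diff_action act -> ring_action act.
Proof. by case=> -[h1 hD hM _] [hid hc]; split. Qed.

Lemma funact_ring_action (gT : finGroupType) (R : comNzRingType) :
  ring_action (C := FunRing gT R) (@funact gT R).
Proof.
split=> [g|g x y|g x y|x|g h x]; apply/ffunP => t;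
  rewrite ?FunRing_mulE ?FunRing_oneE !ffunE ?FunRing_mulE ?FunRing_oneE //.
- by rewrite invg1 mul1g.
- by rewrite invMg mulgA.
Qed.

Section TaylorIdentity.
Variables (gT : finGroupType) (R : comNzRingType) (act : gT -> R -> R).
Hypothesis act_ok : ring_action act.

Let taylorD x y : taylor idfun act (x + y) = taylor idfun act x + taylor idfun act y.
Proof. by apply/ffunP => t; rewrite !ffunE (actD act_ok). Qed.
Let taylor1 : taylor idfun act 1 = 1 :> FunRing gT R.
Proof. by apply/ffunP => t; rewrite FunRing_oneE ffunE (act1 act_ok). Qed.
Let taylorM x y :
  taylor idfun act (x * y) = taylor idfun act x * taylor idfun act y :> FunRing gT R.
Proof. by apply/ffunP => t; rewrite FunRing_mulE !ffunE (actM act_ok). Qed.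

Definition taylor_id : {rmorphism R -> FunRing gT R} :=
  rmorph_of taylorD taylor1 taylorM.

Lemma taylor_id_act g x : taylor_id (act g x) = funact g (taylor_id x).
Proof.
by apply/ffunP => t; rewrite rmorph_ofE !ffunE invMg invgK -(act_comp act_ok).
Qed.

End TaylorIdentity.

Section Evaluation.
Variables (gT : finGroupType) (R : comNzRingType) (C : comPzRingType).
Variables (j : {rmorphism R -> C}) (actC : gT -> C -> C) (n : nat) (a : 'I_n -> C).

Definition dmonom_eval (m : dmonom gT n) : C :=
  \prod_(x : dvar gT n) actC x.2 (a x.1) ^+ m x.
Definition ev (p : dpoly gT R n) : C := \sum_(t <- p) j t.1 * dmonom_eval t.2.

Lemma ev_nil : ev [::] = 0. Proof. by rewrite /ev big_nil. Qed.

Lemma ev_cons t p : ev (t :: p) = j t.1 * dmonom_eval t.2 + ev p.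
Proof. by rewrite /ev big_cons. Qed.

Lemma ev_dadd p q : ev (dadd p q) = ev p + ev q.
Proof. by rewrite /ev /dadd big_cat. Qed.

Lemma ev_flatten (ps : seq (dpoly gT R n)) :
  ev (flatten ps) = \sum_(p <- ps) ev p.
Proof.
by elim: ps => [|p ps IH]; rewrite ?big_nil ?ev_nil //= big_cons -IH -ev_dadd.
Qed.

Lemma dmonom_eval0 : dmonom_eval [ffun => 0%N] = 1.
Proof. by rewrite /dmonom_eval big1 // => x _; rewrite ffunE expr0. Qed.

Lemma dmonom_evalD (m1 m2 : dmonom gT n) :
  dmonom_eval [ffun x => (m1 x + m2 x)%N] = dmonom_eval m1 * dmonom_eval m2.
Proof.
by rewrite /dmonom_eval -big_split; apply: eq_bigr => x _; rewrite ffunE exprD.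
Qed.

Lemma ev_one : ev (done_ gT R n) = 1.
Proof. by rewrite ev_cons ev_nil addr0 rmorph1 dmonom_eval0 mul1r. Qed.

Lemma ev_mul p q : ev (dmul p q) = ev p * ev q.
Proof.
rewrite /ev /dmul big_allpairs_dep /= mulr_suml; apply: eq_bigr => t _.
by rewrite mulr_sumr; apply: eq_bigr => u _ /=; rewrite dmonom_evalD rmorphM mulrACA.
Qed.

Lemma ev_pow p k : ev (dpow p k) = ev p ^+ k.
Proof. by elim: k => [|k IH]; rewrite ?ev_one // exprS -IH /dpow iterS ev_mul. Qed.

Lemma ev_dcoef_sum p (s : seq (dmonom gT n)) : uniq s -> {subset map snd p <= s} ->
  ev p = \sum_(m <- s) j (dcoef p m) * dmonom_eval m.
Proof.
move=> s_uniq p_s; rewrite /dcoef.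
transitivity (\sum_(m <- s) \sum_(t <- p | t.2 == m) j t.1 * dmonom_eval t.2).
  rewrite (exchange_big_dep predT) //= /ev [LHS]big_seq_cond [RHS]big_seq_cond.
  apply: eq_bigr => t /andP[tp _]; rewrite big_const_seq.
  have -> : count (fun m => t.2 == m) s = 1%N.
    rewrite (eq_count (a2 := pred1 t.2)); last by move=> m; rewrite /= eq_sym.
    by rewrite count_uniq_mem // p_s // map_f.
  by rewrite /= addr0.
by apply: eq_bigr => m _; rewrite rmorph_sum mulr_suml; apply: eq_bigr => t /eqP ->.
Qed.

Lemma ev_dcoef p q : dcoef p =1 dcoef q -> ev p = ev q.
Proof.
move=> pq; set s := undup (map snd (p ++ q)).
have s_uniq : uniq s by rewrite undup_uniq.
have s_p : {subset map snd p <= s}.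
  by move=> m mp; rewrite mem_undup map_cat mem_cat mp.
have s_q : {subset map snd q <= s}.
  by move=> m mq; rewrite mem_undup map_cat mem_cat mq orbT.
rewrite (ev_dcoef_sum s_uniq s_p) (ev_dcoef_sum s_uniq s_q).
by apply: eq_bigr => m _; rewrite pq.
Qed.

Lemma ev_dact (actR : gT -> R -> R) g p :
  ring_action actC -> (forall g c, j (actR g c) = actC g (j c)) ->
  ev (dact actR g p) = actC g (ev p).
Proof.
move=> act_ok jact; rewrite /ev /dact big_map (act_sum act_ok).
apply: eq_bigr => t _ /=; rewrite jact (actM act_ok); congr (_ * _).
rewrite /dmonom_eval (act_prod act_ok).
rewrite (reindex_inj (h := fun x : dvar gT n => (x.1, g * x.2)%g)) /=; last first.
  by move=> [i s] [i' s'] /= [-> /mulgI ->].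
by apply: eq_bigr => -[i s] _; rewrite ffunE /= mulKg (act_comp act_ok) (actX act_ok).
Qed.

End Evaluation.

Lemma deval_ev (gT : finGroupType) (R : comNzRingType) (act : gT -> R -> R) n
    (b : 'I_n -> R) (q : dpoly gT R n) : deval act b q = ev idfun act b q.
Proof. by []. Qed.

Section BasicDifferencePolynomials.
Variables (gT : finGroupType) (R : comNzRingType).

Definition dmonom_var n (v : dvar gT n) (k : nat) : dmonom gT n :=
  [ffun x => if x == v then k else 0%N].
Definition dvarp n (v : dvar gT n) : dpoly gT R n := [:: (1, dmonom_var v 1)].
Definition dconst n (c : R) : dpoly gT R n := [:: (c, [ffun => 0%N])].
Definition dpoly_of_poly (p : {poly R}) : dpoly gT R 1 :=
  [seq (p`_i, dmonom_var (ord0, 1%g) i) | i <- index_iota 0 (size p)].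

Variables (C : comPzRingType) (j : {rmorphism R -> C}) (actC : gT -> C -> C).

Lemma dmonom_eval_var n (a : 'I_n -> C) v k :
  dmonom_eval actC a (dmonom_var v k) = actC v.2 (a v.1) ^+ k.
Proof.
rewrite /dmonom_eval (bigD1 v) //= ffunE eqxx big1 ?mulr1 // => x /negbTE xv.
by rewrite ffunE xv expr0.
Qed.

Lemma ev_dvarp n (a : 'I_n -> C) v : ev j actC a (dvarp v) = actC v.2 (a v.1).
Proof. by rewrite ev_cons ev_nil addr0 rmorph1 mul1r dmonom_eval_var expr1. Qed.

Lemma ev_dvarp_sum n (a : 'I_n -> C) i (s : seq gT) :
  ev j actC a (flatten [seq dvarp (i, g) | g <- s]) = \sum_(g <- s) actC g (a i).
Proof. by rewrite ev_flatten big_map; apply: eq_bigr => g _; rewrite ev_dvarp. Qed.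

Lemma ev_dconst n (a : 'I_n -> C) c : ev j actC a (dconst n c) = j c.
Proof. by rewrite ev_cons ev_nil addr0 dmonom_eval0 mulr1. Qed.

Lemma ev_dpoly_of_poly (a : 'I_1 -> C) p : ring_action actC ->
  ev j actC a (dpoly_of_poly p) = \sum_(i < size p) j p`_i * a ord0 ^+ i.
Proof.
move=> /act_id act_id.
rewrite /ev big_map -(big_mkord xpredT (fun i => j p`_i * a ord0 ^+ i)).
by apply: eq_bigr => i _ /=; rewrite dmonom_eval_var act_id.
Qed.

End BasicDifferencePolynomials.
Arguments dvarp {gT R n}.
Arguments dconst {gT R} n.
Arguments dpoly_of_poly {gT R}.

Record proper_stable_ideal (gT : finGroupType) (C : comPzRingType)
    (act : gT -> C -> C) (I : C -> Prop) : Prop := ProperStableIdeal {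
  ideal0 : I 0;
  idealD : forall x y, I x -> I y -> I (x + y);
  idealM : forall r x, I x -> I (r * x);
  ideal_stable : forall g x, I x -> I (act g x);
  ideal_proper : ~ I 1 }.

Lemma zero_proper_stable_ideal (gT : finGroupType) (C : comPzRingType)
    (act : gT -> C -> C) :
  ring_action act -> (1 : C) != 0 -> proper_stable_ideal act (fun x => x = 0).
Proof.
move=> act_ok one_nz; split=> [||r x ->|g x ->|]; rewrite ?mulr0 ?(act0 act_ok) //.
- by move=> x y -> ->; rewrite addr0.
- by move/eqP; rewrite (negbTE one_nz).
Qed.

Section DifferenceClosedTransfer.
Variables (gT : finGroupType) (B : comNzRingType) (actB : gT -> B -> B).
Hypothesis dcB : difference_closed actB.

Lemma stable_ideal_zero n (P : dpoly gT B n -> Prop) :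
  dpoly_ideal P -> dpoly_stable actB P -> (forall k, ~ P (dpow (done_ gT B n) k)) ->
  exists b : 'I_n -> B, forall q, P q -> deval actB b q = 0.
Proof.
move=> Pideal Pstable Pproper; apply: contrapT => no_zero.
case: (proj2 (dcB Pideal Pstable (done_ gT B n))) => [b b_zero|k Pk].
  by case: no_zero; exists b.
exact: Pproper Pk.
Qed.

Lemma difference_closed_transfer n (C : comPzRingType) (actC : gT -> C -> C)
    (j : {rmorphism B -> C}) (I : C -> Prop) (c : 'I_n -> C) :
  ring_action actC -> (forall g x, j (actB g x) = actC g (j x)) ->
  proper_stable_ideal actC I ->
  exists b : 'I_n -> B, forall q, I (ev j actC c q) -> deval actB b q = 0.
Proof.
move=> act_ok jact [I0 ID IM Istable Iproper].
apply: (@stable_ideal_zero n (fun q => I (ev j actC c q))).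
- split=> [p q pq||p q Ip Iq|p q Iq]; rewrite ?ev_nil ?ev_dadd ?ev_mul //.
  + by rewrite (ev_dcoef _ _ _ pq).
  + exact: ID.
  + exact: IM.
- by move=> g p Ip; rewrite /= (ev_dact _ _ _ act_ok jact); apply: Istable.
- by move=> k; rewrite ev_pow ev_one expr1n.
Qed.

End DifferenceClosedTransfer.

Lemma idempotent_const_not_multiple (R : comNzRingType) (e : R) (g h : {poly R}) :
  e * e = e -> e != 0 -> lead_coef g = e -> (1 < size g)%N -> e%:P = h * g -> False.
Proof.
move=> ee enz lead_g size_g eP.
pose h' := e%:P * h.
have eP' : e%:P = h' * g by rewrite /h' -mulrA -eP -polyCM ee.
have h'nz : h' != 0.
  by apply: contra_eq_neq eP' => ->; rewrite mul0r polyC_eq0.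
have lead_h'e : lead_coef h' * lead_coef g = lead_coef h'.
  by rewrite lead_g !lead_coefE coefCM mulrAC ee.
have := congr1 (fun p : {poly R} => size p) eP'.
rewrite size_polyC enz size_proper_mul /=; last by rewrite lead_h'e lead_coef_eq0.
have : (0 < size h')%N by rewrite size_poly_gt0.
by move: (size h') (size g) size_g => n k; lia.
Qed.

Section SplittingIdempotent.
Variables (gT : finGroupType) (B : comNzRingType) (actB : gT -> B -> B).
Hypothesis pfB : pseudofield actB.

Lemma pseudofield_ring_action : ring_action actB.
Proof. by case: pfB => + _ _; exact: diff_action_ring_action. Qed.
Let actB_ok := pseudofield_ring_action.

Lemma pseudofield_act_inj g : injective (actB g).
Proof. by case: pfB => -[[_ _ _ /(_ g) /bij_inj]]. Qed.

(* e is idempotent and its translates form a complete orthogonal system, so that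
   B is the product of the rings (g e) B. *)
Definition splitting_idempotent (e : B) :=
  [/\ e * e = e, forall g h, g != h -> actB g e * actB h e = 0
    & \sum_(g : gT) actB g e = 1].

(* The delta function at 1 is a splitting idempotent of Fun(gT, B); its defining
   equations transfer to B. *)
Lemma exists_splitting_idempotent :
  difference_closed actB -> exists e, splitting_idempotent e.
Proof.
move=> dcB; pose delta : 'I_1 -> FunRing gT B := fun=> [ffun t => (t == 1%g)%:R].
have [b b_sol] := difference_closed_transfer dcB delta (funact_ring_action gT B)
  (taylor_id_act actB_ok)
  (zero_proper_stable_ideal (funact_ring_action gT B) (FunRing_one_neq0 gT B)).
have solve q : ev (taylor_id actB_ok) (@funact gT B) delta q = 0 ->
    ev idfun actB b q = 0 by rewrite -deval_ev; exact: b_sol.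
pose y (g : gT) : dpoly gT B 1 := dvarp (ord0, g).
exists (b ord0); split.
- have := solve (dadd (dmul (y 1%g) (y 1%g)) (dmul (dconst 1 (-1)) (y 1%g))).
  rewrite !ev_dadd !ev_mul !ev_dvarp !ev_dconst /= (act_id actB_ok) mulN1r => sol.
  apply/eqP; rewrite -subr_eq0; apply/eqP/sol/ffunP => t.
  rewrite !(FunRing_mulE, ffunE) invg1 mul1g (actN actB_ok) (act1 actB_ok).
  by case: (t == 1%g); rewrite ?mulr1 ?mulr0 ?subrr ?addr0.
- move=> g h gh; have := solve (dmul (y g) (y h)).
  rewrite !ev_mul !ev_dvarp /=; apply; apply/ffunP => t.
  rewrite !(FunRing_mulE, ffunE) -!eq_mulVg1.
  case: (eqVneq g t) => [<-|_]; last by rewrite mul0r.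
  by rewrite eq_sym (negbTE gh) mulr0.
- have := solve (dadd (flatten [seq y g | g <- index_enum gT]) (dconst 1 (-1))).
  rewrite !ev_dadd !ev_dvarp_sum !ev_dconst /= => sol.
  apply/eqP; rewrite -subr_eq0; apply/eqP/sol/ffunP => t.
  rewrite !ffunE sum_ffunE (bigD1 t) //= big1 => [|g gt]; last first.
    by rewrite !ffunE -eq_mulVg1 (negbTE gt).
  by rewrite !ffunE mulVg eqxx addr0 (actN actB_ok) (act1 actB_ok) subrr.
Qed.

Section SplittingIdempotentTheory.
Variable e : B.
Hypothesis e_split : splitting_idempotent e.

Lemma splitting_idem : e * e = e. Proof. by case: e_split. Qed.

Lemma splitting_orth g : g != 1%g -> e * actB g e = 0.
Proof.
by case: e_split => _ orth _ g1; rewrite -{1}[e](act_id actB_ok) orth // eq_sym.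
Qed.

Lemma splitting_neq0 : e != 0.
Proof.
case: e_split => _ _; apply: contra_eq_neq => ->.
rewrite big1 => [|g _]; last exact: act0.
by rewrite eq_sym oner_neq0.
Qed.

(* e is a primitive idempotent: eB has no proper idempotent, because the ideal
   generated by the translates of an idempotent f <= e is stable, hence B. *)
Lemma splitting_primitive f : f * f = f -> f * e = f -> f != 0 -> f = e.
Proof.
move=> ff fe fnz.
pose I x := exists r : gT -> B, x = \sum_t r t * actB t f.
have I_ideal : ring_ideal I.
  split.
  - by exists (fun=> 0); rewrite big1 // => t _; rewrite mul0r.
  - move=> x y [r1 ->] [r2 ->]; exists (fun t => r1 t + r2 t).
    by rewrite -big_split; apply: eq_bigr => t _; rewrite mulrDl.
  - move=> r x [r1 ->]; exists (fun t => r * r1 t).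
    by rewrite mulr_sumr; apply: eq_bigr => t _; rewrite mulrA.
have I_stable : stable_ideal actB I.
  move=> g x [r ->]; exists (fun s => actB g (r (g^-1 * s)%g)).
  rewrite (act_sum actB_ok) [RHS](reindex_inj (mulgI g)) /=; apply: eq_bigr => t _.
  by rewrite (actM actB_ok) mulKg (act_comp actB_ok).
case: pfB => _ _ /(_ I I_ideal I_stable) [I0|I1].
  case/eqP: fnz; apply: I0; exists (fun t => (t == 1%g)%:R).
  rewrite (bigD1 1%g) //= eqxx mul1r (act_id actB_ok) big1 ?addr0 // => t /negbTE ->.
  by rewrite mul0r.
have [r one_r] := I1 1.
have e_ef : e = r 1%g * (e * f).
  rewrite -{1}[e]mulr1 one_r mulr_sumr (bigD1 1%g) //= (act_id actB_ok) mulrCA.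
  rewrite big1 ?addr0 // => t t1.
  rewrite -fe (actM actB_ok) mulrCA [actB t f * _]mulrC [e * _]mulrA.
  by rewrite splitting_orth // mul0r mulr0.
by rewrite -fe mulrC {1}e_ef -!mulrA ff -e_ef.
Qed.

(* eB is a domain (indeed a field): B is absolutely flat and e is primitive. *)
Lemma splitting_domain x y : e * x * y = 0 -> e * x = 0 \/ e * y = 0.
Proof.
move=> exy; case: pfB => _ flat _; have [c ex_c] := flat (e * x).
pose f := e * x * c.
have ff : f * f = f by rewrite /f mulrACA mulrA -ex_c.
have fe : f * e = f by rewrite /f mulrC !mulrA splitting_idem.
have [f0|fnz] := eqVneq f 0; first by left; rewrite ex_c -mulrA -/f f0 mulr0.
by right; rewrite -(splitting_primitive ff fe fnz) /f mulrAC exy mul0r.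
Qed.

End SplittingIdempotentTheory.

Lemma splitting_translate e t : splitting_idempotent e -> splitting_idempotent (actB t e).
Proof.
case=> [ee orth sum]; split.
- by rewrite -(actM actB_ok) ee.
- move=> g h gh; rewrite -!(act_comp actB_ok); apply: orth.
  by apply: contraNneq gh => /mulIg ->.
- rewrite -sum [RHS](reindex_inj (mulIg t)) /=.
  by apply: eq_bigr => g _; rewrite (act_comp actB_ok).
Qed.

Definition act_rmorph t : {rmorphism B -> B} :=
  rmorph_of (actD actB_ok t) (act1 actB_ok t) (actM actB_ok t).
Definition poly_act t (p : {poly B}) : {poly B} := map_poly (act_rmorph t) p.

Lemma poly_act_ring_action : ring_action poly_act.
Proof.
split=> [g|g x y|g x y|x|g h x]; rewrite /poly_act ?rmorph1 ?rmorphD ?rmorphM //.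
  by rewrite map_poly_id // => c _; exact: (act_id actB_ok).
by rewrite -map_poly_comp; apply: eq_map_poly => c; exact: (act_comp actB_ok).
Qed.

Lemma coef_poly_act t p i : (poly_act t p)`_i = actB t p`_i.
Proof. by rewrite coef_map. Qed.

Lemma polyC_act t x : (actB t x)%:P = poly_act t x%:P.
Proof. by rewrite /poly_act map_polyC. Qed.

Lemma multiples_proper_stable_ideal e (g : {poly B}) :
  splitting_idempotent e -> lead_coef g = e -> (1 < size g)%N ->
  proper_stable_ideal poly_act (fun h => forall t, exists R, e%:P * poly_act t h = R * g).
Proof.
move=> e_split lead_g size_g; have act_ok := poly_act_ring_action.
split=> [t|x y Ix Iy t|r x Ix t|t' x Ix t|I1].
- by exists 0; rewrite (act0 act_ok) mulr0 mul0r.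
- have [[R1 H1] [R2 H2]] := (Ix t, Iy t).
  by exists (R1 + R2); rewrite (actD act_ok) mulrDr H1 H2 mulrDl.
- have [R1 H1] := Ix t; exists (poly_act t r * R1).
  by rewrite (actM act_ok) mulrCA H1 mulrA.
- by have [R1 H1] := Ix (t * t')%g; exists R1; rewrite -(act_comp act_ok).
- have [R H] := I1 1%g; rewrite (act1 act_ok) mulr1 in H.
  exact: idempotent_const_not_multiple (splitting_idem e_split)
    (splitting_neq0 e_split) lead_g size_g H.
Qed.

(* eB is algebraically closed: a polynomial over eB with leading coefficient e has
   a root in eB.  The root is transferred from the point eX of B[X], at which g
   vanishes modulo the ideal above. *)
Lemma splitting_alg_closed e :
  difference_closed actB -> splitting_idempotent e -> forall g : {poly B},
  (forall i, e * g`_i = g`_i) -> lead_coef g = e -> (1 < size g)%N ->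
  exists r, e * r = r /\ g.[r] = 0.
Proof.
move=> dcB e_split g eg lead_g size_g; have ee := splitting_idem e_split.
have g_eX i k : g`_i * e ^+ k = g`_i.
  by elim: k => [|k IH]; rewrite ?expr0 ?mulr1 // exprS mulrCA IH eg.
pose eX : 'I_1 -> {poly B} := fun=> e%:P * 'X.
have [b b_sol] := difference_closed_transfer dcB eX poly_act_ring_action polyC_act
  (multiples_proper_stable_ideal e_split lead_g size_g).
have := b_sol (dpoly_of_poly g); rewrite deval_ev (ev_dpoly_of_poly _ _ _ actB_ok).
rewrite (ev_dpoly_of_poly _ _ _ poly_act_ring_action) => g_root.
exists (e * b ord0); split; first by rewrite mulrA ee.
rewrite horner_coef -[RHS]g_root => [|t].
  by apply: eq_bigr => i _; rewrite exprMn mulrA g_eX.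
have -> : \sum_(i < size g) (g`_i)%:P * (e%:P * 'X) ^+ i = g.
  rewrite -[RHS]coefK poly_def; apply: eq_bigr => i _.
  by rewrite exprMn -rmorphXn mulrA -polyCM g_eX mul_polyC.
have [->|t1] := eqVneq t 1%g.
  exists 1; rewrite (act_id poly_act_ring_action) mul1r.
  by apply/polyP => i; rewrite coefCM eg.
exists 0; rewrite mul0r; apply/polyP => i; rewrite coefCM coef_poly_act coef0 -eg.
by rewrite (actM actB_ok) mulrA (splitting_orth e_split t1) mul0r.
Qed.

End SplittingIdempotent.

Lemma ex_minn_prop (Q : nat -> Prop) :
  (exists n, Q n) -> exists n, Q n /\ forall k, Q k -> (n <= k)%N.
Proof.
move=> [n Qn]; have exQ : exists n, `[< Q n >] by exists n; apply/asboolP.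
case: (ex_minnP exQ) => m /asboolP Qm m_min.
by exists m; split=> // k /asboolP; exact: m_min.
Qed.

Lemma size_sub_lead (R : nzRingType) (g h : {poly R}) : size h = size g ->
  lead_coef h = lead_coef g -> (0 < size g)%N -> (size (g - h)%R < size g)%N.
Proof.
move=> sh lh sg; rewrite -[X in (_ < X)%N](prednK sg) ltnS; apply/leq_sizeP => j hj.
rewrite coefB; case: (ltngtP j (size g)) => [jlt|jgt|->].
- have -> : j = (size g).-1 by apply/eqP; rewrite eqn_leq hj andbT -ltnS prednK.
  by rewrite -lead_coefE -sh -lead_coefE lh subrr.
- by rewrite !nth_default ?subrr // ?sh // ltnW.
- by rewrite !nth_default ?subrr // ?sh.
Qed.

Record subring_pred (R : pzRingType) (K : R -> Prop) : Prop := SubringPred {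
  subring1 : K 1;
  subringB : forall x y, K x -> K y -> K (x - y);
  subringM : forall x y, K x -> K y -> K (x * y) }.

Section SubringPolynomials.
Variables (L : fieldType) (K : L -> Prop).
Hypothesis K_subring : subring_pred K.
Let K1 := subring1 K_subring.
Let KB := subringB K_subring.
Let KM := subringM K_subring.

Lemma subring0 : K 0. Proof. by rewrite -(subrr 1); apply: KB. Qed.
Lemma subringN x : K x -> K (- x).
Proof. by rewrite -sub0r; apply: KB; apply: subring0. Qed.
Lemma subringD x y : K x -> K y -> K (x + y).
Proof. by move=> Kx /subringN Ky; rewrite -[y]opprK; apply: KB. Qed.
Lemma subring_sum (I : Type) (s : seq I) (F : I -> L) :
  (forall i, K (F i)) -> K (\sum_(i <- s) F i).
Proof.
move=> KF; elim: s => [|i s IH]; first by rewrite big_nil; exact: subring0.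
by rewrite big_cons; apply: subringD.
Qed.
Lemma subringX x k : K x -> K (x ^+ k).
Proof. by move=> Kx; elim: k => [|k IH]; rewrite ?expr0 // exprS; apply: KM. Qed.
Lemma subring_nat (b : bool) : K b%:R.
Proof. by case: b; [exact: K1 | exact: subring0]. Qed.

Definition Kpoly (g : {poly L}) := forall i, K g`_i.

Lemma Kpoly_horner g y : Kpoly g -> K y -> K g.[y].
Proof.
move=> Kg Ky; rewrite horner_coef; apply: subring_sum => i.
by apply: KM; [exact: Kg | exact: subringX].
Qed.

Lemma Kpoly_lead g : Kpoly g -> K (lead_coef g).
Proof. by move=> Kg; rewrite lead_coefE. Qed.
Lemma KpolyC c : K c -> Kpoly c%:P.
Proof. by move=> Kc i; rewrite coefC; case: (i == 0)%N => //; exact: subring0. Qed.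
Lemma KpolyX : Kpoly 'X.
Proof. by move=> i; rewrite coefX; exact: subring_nat. Qed.
Lemma KpolyXn k : Kpoly 'X^k.
Proof. by move=> i; rewrite coefXn; exact: subring_nat. Qed.
Lemma KpolyB g h : Kpoly g -> Kpoly h -> Kpoly (g - h).
Proof. by move=> Kg Kh i; rewrite coefB; apply: KB. Qed.
Lemma KpolyD g h : Kpoly g -> Kpoly h -> Kpoly (g + h).
Proof. by move=> Kg Kh i; rewrite coefD; apply: subringD. Qed.
Lemma KpolyM g h : Kpoly g -> Kpoly h -> Kpoly (g * h).
Proof. by move=> Kg Kh i; rewrite coefM; apply: subring_sum => j; apply: KM. Qed.
Lemma KpolyZ c g : K c -> Kpoly g -> Kpoly (c *: g).
Proof. by move=> Kc Kg i; rewrite coefZ; apply: KM. Qed.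

Lemma Kpoly_minimal x : (exists2 g, g != 0 & Kpoly g /\ root g x) ->
  exists mu, [/\ mu != 0, Kpoly mu, root mu x
    & forall g, Kpoly g -> g != 0 -> root g x -> (size mu <= size g)%N].
Proof.
move=> [g0 g0nz [Kg0 g0_x]].
pose Q n := exists g, [/\ g != 0, Kpoly g, root g x & size g = n].
have [n [[mu [munz Kmu mu_x <-]] mu_min]] : exists n, Q n /\ forall k, Q k -> (n <= k)%N.
  by apply: ex_minn_prop; exists (size g0), g0.
by exists mu; split=> // g Kg gnz g_x; apply: mu_min; exists g.
Qed.

Lemma Kpoly_minimal_dvd x mu :
  Kpoly mu -> lead_coef mu = 1 -> root mu x ->
  (forall g, Kpoly g -> g != 0 -> root g x -> (size mu <= size g)%N) ->
  forall g, Kpoly g -> root g x -> exists2 h, Kpoly h & g = h * mu.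
Proof.
move=> Kmu mu_monic mu_x mu_min g.
have [k] := ubnP (size g); elim: k g => // k IH g size_g Kg g_x.
have [->|gnz] := eqVneq g 0.
  by exists 0; rewrite ?mul0r // => i; rewrite coef0; exact: subring0.
have mu_g := mu_min g Kg gnz g_x.
have mu_nz : mu != 0 by rewrite -lead_coef_eq0 mu_monic oner_neq0.
pose h := lead_coef g *: 'X^(size g - size mu).
have size_hmu : size (h * mu) = size g.
  by rewrite -scalerAl size_scale ?lead_coef_eq0 // mulrC size_mulXn // subnK.
have lead_hmu : lead_coef (h * mu) = lead_coef g.
  by rewrite -scalerAl lead_coefZ lead_coefM lead_coefXn mu_monic !mulr1.
have Kh : Kpoly h by apply: KpolyZ; [exact: Kpoly_lead | exact: KpolyXn].
have size_r : (size (g - h * mu)%R < k)%N.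
  by rewrite -ltnS (leq_trans _ size_g) // ltnS size_sub_lead // size_poly_gt0.
have Kr : Kpoly (g - h * mu) by apply: KpolyB => //; apply: KpolyM.
have r_x : root (g - h * mu) x.
  by rewrite /root hornerD hornerN hornerM (rootP g_x) (rootP mu_x) mulr0 subrr.
have [h' Kh' g_eq] := IH _ size_r Kr r_x.
by exists (h' + h); [apply: KpolyD | rewrite mulrDl -g_eq subrK].
Qed.

End SubringPolynomials.

(* If y is a nonzero element of a subring K that is algebraic over a subfield
   F <= K, then y^-1 lies in F[y], hence in K: for f of least size with
   f(y) = 0, f = f' X + f(0) with f(0) != 0 and y^-1 = - f(0)^-1 f'(y). *)
Lemma subring_inv (L : fieldType) (F K : L -> Prop) y :
  subring_pred F -> subring_pred K ->
  (forall a, F a -> K a) -> (forall a, F a -> a != 0 -> F a^-1) ->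
  (exists2 f, f != 0 & Kpoly F f /\ root f y) -> K y -> y != 0 -> K y^-1.
Proof.
move=> F_subring K_subring FK F_inv algy Ky ynz.
have [f [fnz Ff f_y f_min]] := Kpoly_minimal algy.
pose f' := drop_poly 1 f.
have f_eq : f = f' * 'X + (f`_0)%:P.
  rewrite -[f in LHS](poly_take_drop 1) addrC expr1; congr (_ + _).
  by apply/polyP => i; rewrite coef_take_poly coefC; case: i.
have Ff' : Kpoly F f' by move=> i; rewrite coef_drop_poly.
have f0_nz : f`_0 != 0.
  apply/eqP => f00.
  have f'nz : f' != 0 by apply: contraNneq fnz => f'0; rewrite f_eq f'0 f00 mul0r addr0.
  have f'_y : root f' y.
    by move: f_y; rewrite /root f_eq f00 addr0 hornerMX mulf_eq0 (negbTE ynz) orbF.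
  by have := f_min f' Ff' f'nz f'_y; rewrite f_eq f00 addr0 size_mulX // ltnn.
have f'_y : f'.[y] * y = - f`_0.
  by apply/eqP; rewrite -addr_eq0 -hornerMXaddC -f_eq.
have -> : y^-1 = - (f`_0)^-1 * f'.[y].
  by apply: (mulfI ynz); rewrite mulfV // mulrCA [y * _]mulrC f'_y mulrNN mulVf.
apply: (subringM K_subring); first exact/(subringN K_subring)/FK/F_inv.
by apply: (Kpoly_horner K_subring) => // i; apply: FK.
Qed.

(* Here phi(A) is
   a subfield of the field L over which L is algebraic, and a |-> e iota(a) induces
   an embedding of phi(A) into eB; it extends to L. *)
Section Extension.
Variables (A B : comNzRingType) (L : fieldType).
Variables (phi : {rmorphism A -> L}) (iota : {rmorphism A -> B}) (e : B).
Hypothesis e_idem : e * e = e.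
Hypothesis e_neq0 : e != 0.
Hypothesis phi_ker : forall a, phi a = 0 -> e * iota a = 0.
Hypothesis phi_field : forall a, phi a != 0 -> exists a', phi a * phi a' = 1.
Hypothesis L_alg : forall x : L, exists p : {poly L},
  [/\ p != 0, forall i, exists a, p`_i = phi a & root p x].
Hypothesis eB_closed : forall g : {poly B}, (forall i, e * g`_i = g`_i) ->
  lead_coef g = e -> (1 < size g)%N -> exists r, e * r = r /\ g.[r] = 0.

Record partial_embedding := PartialEmbedding {
  pe_dom : L -> Prop;
  pe_fun : L -> B;
  pe_subring : subring_pred pe_dom;
  pe_dom_phi : forall a, pe_dom (phi a);
  pe_fun_phi : forall a, pe_fun (phi a) = e * iota a;
  pe_funD : forall x y, pe_dom x -> pe_dom y -> pe_fun (x + y) = pe_fun x + pe_fun y;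
  pe_funM : forall x y, pe_dom x -> pe_dom y -> pe_fun (x * y) = pe_fun x * pe_fun y }.

Definition pe_le (p q : partial_embedding) :=
  (forall x, pe_dom p x -> pe_dom q x) /\
  (forall x, pe_dom p x -> pe_fun q x = pe_fun p x).

Lemma pe_le_refl p : pe_le p p. Proof. by split. Qed.

Lemma pe_le_trans p q s : pe_le p q -> pe_le q s -> pe_le p s.
Proof.
move=> [dpq fpq] [dqs fqs]; split=> x px; first exact/dqs/dpq.
by rewrite fqs ?fpq //; apply: dpq.
Qed.

Section PartialEmbeddingTheory.
Variable p : partial_embedding.
Local Notation K := (pe_dom p).
Local Notation chi := (pe_fun p).
Let K_subring := pe_subring p.

Lemma pe_fun0 : chi 0 = 0.
Proof. by rewrite -(rmorph0 phi) pe_fun_phi rmorph0 mulr0. Qed.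
Lemma pe_fun1 : chi 1 = e.
Proof. by rewrite -(rmorph1 phi) pe_fun_phi rmorph1 mulr1. Qed.
Lemma pe_funB x y : K x -> K y -> chi (x - y) = chi x - chi y.
Proof.
move=> Kx Ky; apply: (addIr (chi y)).
by rewrite -pe_funD ?subrK //; apply: (subringB K_subring).
Qed.
Lemma pe_fun_sum (I : Type) (s : seq I) (F : I -> L) : (forall i, K (F i)) ->
  chi (\sum_(i <- s) F i) = \sum_(i <- s) chi (F i).
Proof.
move=> KF; elim: s => [|i s IH]; rewrite ?big_nil ?pe_fun0 // !big_cons.
by rewrite pe_funD ?IH //; apply: subring_sum.
Qed.
Lemma pe_fun_e x : K x -> e * chi x = chi x.
Proof.
by move=> Kx; rewrite -pe_fun1 mulrC -pe_funM ?mulr1 //; exact: (subring1 K_subring).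
Qed.

(* K is a field, being algebraic over the subfield phi(A). *)
Lemma pe_inv y : K y -> y != 0 -> K y^-1.
Proof.
apply: (@subring_inv _ (fun z => exists a, z = phi a)) => //.
- split; first by exists 1; rewrite rmorph1.
  + by move=> _ _ [a ->] [b ->]; exists (a - b); rewrite rmorphB.
  + by move=> _ _ [a ->] [b ->]; exists (a * b); rewrite rmorphM.
- by move=> _ [a ->]; apply: pe_dom_phi.
- move=> _ [a ->] pa; have [a' paa'] := phi_field pa.
  by exists a'; rewrite -[LHS]mulr1 -paa' mulKf.
- by have [f [fnz Ff f_y]] := L_alg y; exists f.
Qed.

Definition pe_poly (g : {poly L}) : {poly B} := map_poly chi g.

Lemma coef_pe_poly g i : (pe_poly g)`_i = chi g`_i.
Proof. exact: (coef_map_id0 _ _ pe_fun0). Qed.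

Lemma pe_polyB g h : Kpoly K g -> Kpoly K h -> pe_poly (g - h) = pe_poly g - pe_poly h.
Proof. by move=> Kg Kh; apply/polyP => i; rewrite coefB !coef_pe_poly coefB pe_funB. Qed.

Lemma pe_polyD g h : Kpoly K g -> Kpoly K h -> pe_poly (g + h) = pe_poly g + pe_poly h.
Proof. by move=> Kg Kh; apply/polyP => i; rewrite coefD !coef_pe_poly coefD pe_funD. Qed.

Lemma pe_polyM g h : Kpoly K g -> Kpoly K h -> pe_poly (g * h) = pe_poly g * pe_poly h.
Proof.
move=> Kg Kh; apply/polyP => i; rewrite coef_pe_poly !coefM pe_fun_sum => [|j].
  by apply: eq_bigr => j _; rewrite !coef_pe_poly pe_funM.
exact: (subringM K_subring).
Qed.

Lemma pe_polyC c : pe_poly c%:P = (chi c)%:P.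
Proof.
by apply/polyP => i; rewrite coef_pe_poly !coefC; case: (i == 0)%N; rewrite ?pe_fun0.
Qed.

Lemma pe_min_poly x : exists mu, [/\ Kpoly K mu, lead_coef mu = 1, root mu x
  & forall g, Kpoly K g -> g != 0 -> root g x -> (size mu <= size g)%N].
Proof.
have [|mu0 [mu0nz Kmu0 mu0_x mu0_min]] := Kpoly_minimal (K := K) (x := x).
  have [f [fnz Ff f_x]] := L_alg x; exists f => //; split=> // i.
  by have [a ->] := Ff i; apply: pe_dom_phi.
have lnz : lead_coef mu0 != 0 by rewrite lead_coef_eq0.
exists ((lead_coef mu0)^-1 *: mu0); split.
- by apply: (KpolyZ K_subring) => //; apply: pe_inv => //; exact: Kpoly_lead.
- by rewrite lead_coefZ mulVf.
- by rewrite /root hornerZ (rootP mu0_x) mulr0.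
- by move=> g Kg gnz g_x; rewrite size_scale ?invr_eq0 //; apply: mu0_min.
Qed.

End PartialEmbeddingTheory.

(* A possible image r of x: a root of the image of the minimal polynomial of x,
   so that every K-polynomial vanishing at x maps to one vanishing at r. *)
Lemma pe_image_root p x : exists r : B,
  forall g, Kpoly (pe_dom p) g -> root g x -> (pe_poly p g).[r] = 0.
Proof.
have [mu [Kmu mu_monic mu_x mu_min]] := pe_min_poly p x.
have chi_lead : pe_fun p (lead_coef mu) != 0 by rewrite mu_monic pe_fun1.
have size_mu : (1 < size mu)%N.
  rewrite ltnNge; apply/negP => /size1_polyC mu_C.
  have mu0 : mu`_0 = 1 by rewrite -mu_monic [in RHS]mu_C lead_coefC.
  by move: mu_x; rewrite mu_C /root hornerC mu0 oner_eq0.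
have [r [_ mu_r]] : exists r, e * r = r /\ (pe_poly p mu).[r] = 0.
  apply: eB_closed.
  - by move=> i; rewrite coef_pe_poly pe_fun_e.
  - by rewrite lead_coef_map_id0 ?pe_fun0 // mu_monic pe_fun1.
  - by rewrite size_map_poly_id0 ?pe_fun0.
exists r => g Kg g_x.
have [h Kh ->] := Kpoly_minimal_dvd (pe_subring p) Kmu mu_monic mu_x mu_min Kg g_x.
by rewrite pe_polyM // hornerM mu_r mulr0.
Qed.

(* Every partial embedding extends to one defined at any given x: send g(x) to
   g^chi(r) for K-polynomials g. *)
Lemma pe_extend p x : exists q, pe_le p q /\ pe_dom q x.
Proof.
have K_subring := pe_subring p.
have [r r_root] := pe_image_root p x.
pose dom' y := exists g, Kpoly (pe_dom p) g /\ y = g.[x].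
pose fun' y :=
  (pe_poly p (classical_sets.xget 0 (fun g => Kpoly (pe_dom p) g /\ y = g.[x]))).[r].
have fun'E g : Kpoly (pe_dom p) g -> fun' g.[x] = (pe_poly p g).[r].
  move=> Kg; have [] := classical_sets.xgetI 0
    (P := fun h => Kpoly (pe_dom p) h /\ g.[x] = h.[x]) (conj Kg erefl).
  rewrite /fun'; set h := classical_sets.xget _ _ => Kh gh.
  apply/eqP; rewrite -subr_eq0 -hornerN -hornerD -pe_polyB //.
  by apply/eqP/r_root; [apply: KpolyB | rewrite /root hornerD hornerN gh subrr].
have domC c : pe_dom p c -> dom' c.
  by exists c%:P; split; [exact: KpolyC | rewrite hornerC].
have fun'C c : pe_dom p c -> fun' c = pe_fun p c.
  move=> Kc; rewrite -[c in LHS](hornerC c x) fun'E ?pe_polyC ?hornerC //.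
  exact: KpolyC.
have dom'_subring : subring_pred dom'.
  split; first exact/domC/(subring1 K_subring).
  - move=> _ _ [g [Kg ->]] [h [Kh ->]]; exists (g - h).
    by rewrite hornerD hornerN; split; first exact: KpolyB.
  - move=> _ _ [g [Kg ->]] [h [Kh ->]]; exists (g * h).
    by rewrite hornerM; split; first exact: KpolyM.
have fun'D y z : dom' y -> dom' z -> fun' (y + z) = fun' y + fun' z.
  move=> [g [Kg ->]] [h [Kh ->]].
  by rewrite -hornerD !fun'E ?pe_polyD ?hornerD //; apply: KpolyD.
have fun'M y z : dom' y -> dom' z -> fun' (y * z) = fun' y * fun' z.
  move=> [g [Kg ->]] [h [Kh ->]].
  by rewrite -hornerM !fun'E ?pe_polyM ?hornerM //; apply: KpolyM.
have dom'_phi a : dom' (phi a) by apply/domC/pe_dom_phi.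
have fun'_phi a : fun' (phi a) = e * iota a.
  by rewrite fun'C ?pe_fun_phi //; apply: pe_dom_phi.
exists (PartialEmbedding dom'_subring dom'_phi fun'_phi fun'D fun'M); split.
  by split=> y Ky /=; [apply: domC | apply: fun'C].
by exists 'X; rewrite hornerX; split; first exact: KpolyX.
Qed.

Lemma pe_base : exists p0, forall q, pe_le p0 q.
Proof.
pose dom0 x := exists a, x = phi a.
pose fun0 x := e * iota (classical_sets.xget 0 (fun a => x = phi a)).
have fun0_phi a : fun0 (phi a) = e * iota a.
  have := classical_sets.xgetI 0 (P := fun b => phi a = phi b) (erefl (phi a)).
  rewrite /fun0; set b := classical_sets.xget _ _ => ab.
  apply/eqP; rewrite -subr_eq0 -mulrBr -rmorphB; apply/eqP/phi_ker.
  by rewrite rmorphB ab subrr.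
have dom0_subring : subring_pred dom0.
  split; first by exists 1; rewrite rmorph1.
  - by move=> _ _ [a ->] [b ->]; exists (a - b); rewrite rmorphB.
  - by move=> _ _ [a ->] [b ->]; exists (a * b); rewrite rmorphM.
have dom0_phi a : dom0 (phi a) by exists a.
have fun0D x y : dom0 x -> dom0 y -> fun0 (x + y) = fun0 x + fun0 y.
  by move=> [a ->] [b ->]; rewrite -rmorphD !fun0_phi rmorphD mulrDr.
have fun0M x y : dom0 x -> dom0 y -> fun0 (x * y) = fun0 x * fun0 y.
  by move=> [a ->] [b ->]; rewrite -rmorphM !fun0_phi rmorphM mulrACA e_idem.
exists (PartialEmbedding dom0_subring dom0_phi fun0_phi fun0D fun0M) => q.
by split=> _ [a ->] /=; [apply: pe_dom_phi | rewrite pe_fun_phi fun0_phi].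
Qed.

(* A chain of partial embeddings has an upper bound: their union. *)
Lemma pe_chain_bound (C : partial_embedding -> Prop) :
  (forall p q, C p -> C q -> pe_le p q \/ pe_le q p) ->
  exists u, forall q, C q -> pe_le q u.
Proof.
move=> C_chain; have [p0 p0_least] := pe_base.
pose C' q := C q \/ q = p0.
have C'_chain p q : C' p -> C' q -> pe_le p q \/ pe_le q p.
  by case=> [Cp|->] [Cq|->]; [exact: C_chain | right | left | left]; apply: p0_least.
pose domU x := exists q, C' q /\ pe_dom q x.
pose value_at x y := exists q, [/\ C' q, pe_dom q x & pe_fun q x = y].
pose funU x := classical_sets.xget 0 (value_at x).
have funUE q x : C' q -> pe_dom q x -> funU x = pe_fun q x.
  move=> C'q qx; have := classical_sets.xgetI 0
    (P := value_at x) (ex_intro _ q (And3 C'q qx erefl)).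
  rewrite -/(funU x) => -[q' [C'q' q'x <-]].
  by case: (C'_chain q q' C'q C'q') => -[_ f_eq]; rewrite f_eq.
have common x y : domU x -> domU y -> exists q, [/\ C' q, pe_dom q x & pe_dom q y].
  move=> [q1 [C1 q1x]] [q2 [C2 q2y]].
  case: (C'_chain q1 q2 C1 C2) => -[dom_le _]; [exists q2 | exists q1].
  - by split=> //; exact: dom_le.
  - by split=> //; exact: dom_le.
have domU_subring : subring_pred domU.
  split; first by exists p0; split; [right | exact: (subring1 (pe_subring p0))].
  - move=> x y /common/[apply] -[q [C'q qx qy]].
    by exists q; split=> //; apply: (subringB (pe_subring q)).
  - move=> x y /common/[apply] -[q [C'q qx qy]].
    by exists q; split=> //; apply: (subringM (pe_subring q)).
have domU_phi a : domU (phi a) by exists p0; split; [right | apply: pe_dom_phi].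
have funU_phi a : funU (phi a) = e * iota a.
  by rewrite (funUE p0) ?pe_fun_phi //; [right | apply: pe_dom_phi].
have funUD x y : domU x -> domU y -> funU (x + y) = funU x + funU y.
  move=> /common/[apply] -[q [C'q qx qy]].
  rewrite !(funUE q) ?pe_funD //; apply: subringD qx qy; exact: pe_subring.
have funUM x y : domU x -> domU y -> funU (x * y) = funU x * funU y.
  move=> /common/[apply] -[q [C'q qx qy]].
  by rewrite !(funUE q) ?pe_funM //; apply: (subringM (pe_subring q)).
exists (PartialEmbedding domU_subring domU_phi funU_phi funUD funUM) => q Cq.
by split=> x qx /=; [exists q; split=> //; left | apply: funUE => //; left].
Qed.

(* Zorn's lemma: a maximal partial embedding is defined everywhere. *)
Lemma extension_to_field : exists chi : L -> B,
  [/\ forall x y, chi (x + y) = chi x + chi y,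
      forall x y, chi (x * y) = chi x * chi y
    & forall a, chi (phi a) = e * iota a].
Proof.
have [p0 _] := pe_base.
pose R p q := `[< pe_le p q >].
have R_refl p : R p p by apply/asboolP/pe_le_refl.
have R_trans p q s : R p q -> R q s -> R p s.
  by move=> /asboolP pq /asboolP qs; apply/asboolP/(pe_le_trans pq qs).
have R_chain (C : partial_embedding -> Prop) : classical_sets.total_on C R ->
    exists u, forall q, C q -> R q u.
  move=> C_chain; have [|u u_ub] := @pe_chain_bound C.
    by move=> p q Cp Cq; case: (C_chain p q Cp Cq) => /asboolP; [left | right].
  by exists u => q /u_ub /asboolP.
have [M M_max] := classical_sets.ZL_preorder p0 R_refl R_trans R_chain.
have M_full x : pe_dom M x.
  have [q [Mq qx]] := pe_extend M x.
  have /M_max/asboolP[qM _] : R M q by apply/asboolP.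
  exact: qM.
by exists (pe_fun M); split=> [x y|x y|a]; rewrite ?pe_funD ?pe_funM ?pe_fun_phi.
Qed.
End Extension.

(* Some translate t e0 of a splitting idempotent cuts out the kernel of phi:
   otherwise the product over t of witnesses a_t would be killed by iota but not
   by phi. *)
Lemma splitting_translate_kernel (gT : finGroupType) (A B : comNzRingType)
    (L : idomainType) (actB : gT -> B -> B) (phi : {rmorphism A -> L})
    (iota : {rmorphism A -> B}) (e0 : B) :
  injective iota -> splitting_idempotent actB e0 ->
  exists t, forall a, actB t e0 * iota a = 0 -> phi a = 0.
Proof.
move=> iota_inj [_ _ e0_sum]; apply: contrapT => no_t.
have witness t : exists a, actB t e0 * iota a = 0 /\ phi a != 0.
  apply: contrapT => no_a; apply: no_t; exists t => a ea; apply: contrapT => /eqP pa.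
  by apply: no_a; exists a.
have [f f_spec] := choice witness.
pose a := \prod_t f t.
have /negP[] : phi a != 0.
  by rewrite rmorph_prod; apply/prodf_neq0 => t _; case: (f_spec t).
have -> : a = 0.
  apply: iota_inj; rewrite rmorph0 -[iota a]mul1r -e0_sum mulr_suml big1 // => t _.
  by rewrite rmorph_prod (bigD1 t) //= mulrA (proj1 (f_spec t)) mul0r.
by rewrite rmorph0.
Qed.

(* If the kernel of a |-> e iota(a) is contained in that of phi, they coincide:
   e B is a domain and A is absolutely flat. *)
Lemma splitting_kernel_eq (gT : finGroupType) (A B : comNzRingType) (L : nzRingType)
    (actB : gT -> B -> B) (phi : {rmorphism A -> L}) (iota : {rmorphism A -> B}) (e : B) :
  pseudofield actB -> absolutely_flat A -> splitting_idempotent actB e ->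
  (forall a, e * iota a = 0 -> phi a = 0) ->
  forall a, phi a = 0 -> e * iota a = 0.
Proof.
move=> pfB flatA e_split e_ker a pa; have [c a_c] := flatA a.
have : e * iota a * iota (1 - a * c) = 0.
  by rewrite -mulrA -rmorphM mulrBr mulr1 mulrA -a_c subrr rmorph0 mulr0.
case/(splitting_domain pfB e_split) => // /e_ker.
by rewrite rmorphB rmorph1 rmorphM pa mul0r subr0 => /eqP; rewrite oner_eq0.
Qed.

Lemma residue_field_inv (A : comNzRingType) (L : nzRingType) (phi : {rmorphism A -> L})
    (m : A -> Prop) :
  maximal_ideal m -> (forall a, phi a = 0 <-> m a) ->
  forall a, phi a != 0 -> exists a', phi a * phi a' = 1.
Proof.
move=> [[m0 mD mM] m1 m_max] ker_phi a /eqP pa.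
pose J z := exists u r, m u /\ z = u + r * a.
have J_ideal : ring_ideal J.
  split.
  - by exists 0, 0; rewrite mul0r addr0.
  - move=> _ _ [u1 [r1 [m1u ->]]] [u2 [r2 [m2u ->]]]; exists (u1 + u2), (r1 + r2).
    by split; [apply: mD | rewrite mulrDl addrACA].
  - move=> r _ [u [r1 [mu ->]]]; exists (r * u), (r * r1).
    by split; [apply: mM | rewrite mulrDr mulrA].
case: (m_max J J_ideal) => [x mx|Jm|J1].
- by exists x, 0; rewrite mul0r addr0.
- by case: pa; apply/ker_phi/Jm; exists 0, 1; rewrite add0r mul1r.
have [u [r [mu one_ur]]] := J1 1; exists r.
by rewrite -rmorphM mulrC -[RHS](rmorph1 phi) one_ur rmorphD (proj2 (ker_phi u) mu) add0r.
Qed.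

(* Fun(gT, L) embeds into B through a splitting idempotent e: given an embedding
   chi of the field L into eB, f |-> sum_t t(chi(f t)) is an injective difference
   morphism, the components living in the orthogonal factors (t e) B. *)
Section FunEmbedding.
Variables (gT : finGroupType) (B : comNzRingType) (actB : gT -> B -> B).
Hypothesis pfB : pseudofield actB.
Variables (L : fieldType) (e : B) (chi : L -> B).
Hypothesis e_split : splitting_idempotent actB e.
Hypothesis chiD : forall x y, chi (x + y) = chi x + chi y.
Hypothesis chiM : forall x y, chi (x * y) = chi x * chi y.
Hypothesis chi1 : chi 1 = e.
Let actB_ok := pseudofield_ring_action pfB.

Lemma chi_e x : e * chi x = chi x.
Proof. by rewrite -chi1 mulrC -chiM mulr1. Qed.

Lemma chi_orth t s x : t != s -> actB t e * actB s (chi x) = 0.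
Proof.
case: e_split => _ orth _ ts.
by rewrite -chi_e (actM actB_ok) mulrA orth // mul0r.
Qed.

Definition fun_embedding_fun (f : {ffun gT -> L}) : B := \sum_t actB t (chi (f t)).

Let fun_embeddingD f g :
  fun_embedding_fun (f + g) = fun_embedding_fun f + fun_embedding_fun g.
Proof.
by rewrite -big_split; apply: eq_bigr => t _; rewrite ffunE chiD (actD actB_ok).
Qed.

Let fun_embedding1 : fun_embedding_fun 1 = 1.
Proof. by case: e_split => _ _ <-; apply: eq_bigr => t _; rewrite ffunE chi1. Qed.

Let fun_embeddingM f g :
  fun_embedding_fun (f * g) = fun_embedding_fun f * fun_embedding_fun g.
Proof.
rewrite /fun_embedding_fun mulr_suml; apply: eq_bigr => t _.
rewrite mulr_sumr (bigD1 t) //= big1 ?addr0 => [|s st].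
  by rewrite ffunE chiM (actM actB_ok).
by rewrite -chi_e (actM actB_ok) mulrAC chi_orth ?mul0r // eq_sym.
Qed.

Definition fun_embedding : {rmorphism {ffun gT -> L} -> B} :=
  rmorph_of fun_embeddingD fun_embedding1 fun_embeddingM.

Lemma fun_embedding_component t f : actB t e * fun_embedding f = actB t (chi (f t)).
Proof.
rewrite rmorph_ofE mulr_sumr (bigD1 t) //= big1 ?addr0 => [|s st].
  by rewrite -(actM actB_ok) chi_e.
by rewrite chi_orth // eq_sym.
Qed.

Lemma fun_embedding_inj : injective fun_embedding.
Proof.
move=> f g fg; apply/ffunP => t; apply/eqP; rewrite -subr_eq0; apply/eqP.
have := fun_embedding_component t (f - g); rewrite rmorphB fg subrr mulr0.
move=> /esym; rewrite -(act0 actB_ok t) !ffunE => /(pseudofield_act_inj pfB) chi_fg.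
apply: contrapT => /eqP fg_t; move/eqP: (splitting_neq0 pfB e_split); apply.
by rewrite -chi1 -(mulfV fg_t) chiM chi_fg mul0r.
Qed.

Lemma fun_embedding_funact g f : fun_embedding (funact g f) = actB g (fun_embedding f).
Proof.
rewrite !rmorph_ofE (act_sum actB_ok) [LHS](reindex_inj (mulgI g)) /=.
by apply: eq_bigr => t _; rewrite ffunE mulKg (act_comp actB_ok).
Qed.

Lemma fun_embedding_taylor (A : comNzRingType) (actA : gT -> A -> A)
    (phi : {rmorphism A -> L}) (iota : {rmorphism A -> B}) :
  (forall a, chi (phi a) = e * iota a) ->
  (forall g a, iota (actA g a) = actB g (iota a)) ->
  forall a, fun_embedding (taylor phi actA a) = iota a.
Proof.
move=> chi_phi iota_act a; case: e_split => _ _ e_sum.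
rewrite rmorph_ofE -[RHS]mul1r -e_sum mulr_suml; apply: eq_bigr => t _.
rewrite ffunE chi_phi iota_act (actM actB_ok) -(act_comp actB_ok) mulgV.
by rewrite (act_id actB_ok).
Qed.

End FunEmbedding.

Unset Implicit Arguments.

Theorem proposition4p15 (gT : finGroupType) (A B : comNzRingType)
    (L : closedFieldType)
    (actA : gT -> A -> A) (actB : gT -> B -> B)
    (pfA : pseudofield actA)
    (m : A -> Prop) (hm : maximal_ideal m)
    (phi : {rmorphism A -> L}) (ker_phi : forall a, phi a = 0 <-> m a)
    (alg_L : forall x : L, exists p : {poly L},
        [/\ p != 0, forall i, exists a, p`_i = phi a & root p x])
    (pfB : pseudofield actB) (dcB : difference_closed actB)
    (iota : {rmorphism A -> B}) (iota_inj : injective iota)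
    (iota_diff : forall g a, iota (actA g a) = actB g (iota a)) :
  exists psi : {rmorphism {ffun gT -> L} -> B},
    [/\ injective psi,
        forall g f, psi (funact g f) = actB g (psi f) &
        forall a, psi (taylor phi actA a) = iota a].
Proof.
have [e0 e0_split] := exists_splitting_idempotent pfB dcB.
have [t e_ker] := splitting_translate_kernel phi iota_inj e0_split.
have e_split := splitting_translate pfB t e0_split.
set e := actB t e0 in e_ker e_split.
have [_ flatA _] := pfA.
have phi_ker := splitting_kernel_eq pfB flatA e_split e_ker.
have [chi [chiD chiM chi_phi]] := extension_to_field (splitting_idem e_split)
  (splitting_neq0 pfB e_split) phi_ker (residue_field_inv hm ker_phi) alg_L
  (splitting_alg_closed pfB dcB e_split).
have chi1 : chi 1 = e by rewrite -(rmorph1 phi) chi_phi rmorph1 mulr1.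
exists (fun_embedding pfB e_split chiD chiM chi1); split.
- exact: fun_embedding_inj.
- exact: fun_embedding_funact.
- exact: fun_embedding_taylor.
Qed.
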